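(* Let $\Lambda\subseteq\mathbb Z^2$ be the lattice with generator matrix $$G=\begin{pmatrix} v_{11} & v_{12}\\ v_{21} & v_{22}\end{pmatrix}.$$ Assume $\Lambda$ induces a lattice tiling of the shape $\mathcal S\subset\mathbb Z^2$. Then the triple $(\Lambda,\mathcal S,\delta)$ defines a folding: <ul> <li>with $\delta=(+1,+1)$ if and only if $\gcd(v_{22}-v_{21},\,v_{11}-v_{12})=1$;</li> <li>with $\delta=(+1,-1)$ if and only if $\gcd(v_{22}+v_{21},\,v_{11}+v_{12})=1$;</li> <li>with $\delta=(+1,0)$ if and only if $\gcd(v_{12},v_{22})=1$;</li> <li>with $\delta=(0,+1)$ if and only if $\gcd(v_{11},v_{21})=1$.</li> </ul>
   Context: Let $D\ge 1$. A shape is a finite nonempty set $\mathcal S\subset\mathbb Z^D$ containing the origin; the origin is its distinguished center point. A lattice is a set $\Lambda=\{\sum_{j=1}^D u_jv_j : u_1,\dots,u_D\in\mathbb Z\}$ for linearly independent $v_1,\dots,v_D\in\mathbb Z^D$. The $D\times D$ matrix $G$ whose rows are $v_1,\dots,v_D$ is a generator matrix of $\Lambda$. $\Lambda$ induces a lattice tiling of $\mathcal S$ if the translates $\mathcal S+\lambda$, $\lambda\in\Lambda$, are pairwise disjoint and cover $\mathbb Z^D$. The translate $\mathcal S+\lambda$ is called the copy of $\mathcal S$ with center $\lambda$. For $x\in\mathbb Z^D$, $c(x)$ denotes the unique $\lambda\in\Lambda$ with $x\in\mathcal S+\lambda$. A ternary vector (direction) is a nonzero $\delta\in\{-1,0,+1\}^D$.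 The folded-row of $(\Lambda,\mathcal S,\delta)$ is the sequence $p_0,p_1,p_2,\dots$ defined by $p_0=0$ and $p_{k+1}=(p_k+\delta)-c(p_k+\delta)$. Equivalently, $p_{k+1}=p_k+\delta$ if $p_k+\delta\in\mathcal S$; otherwise $p_{k+1}$ is $p_k+\delta$ minus the center of the copy of $\mathcal S$ containing $p_k+\delta$. The triple $(\Lambda,\mathcal S,\delta)$ defines a folding if every element of $\mathcal S$ occurs in its folded-row. *)

From Stdlib Require Import ZArith List.
Import ListNotations.
Open Scope Z_scope.

Definition pt := (Z * Z)%type.
Definition padd (x y : pt) : pt := (fst x + fst y, snd x + snd y).
Definition psub (x y : pt) : pt := (fst x - fst y, snd x - snd y).

(* A shape: a finite set of points of Z^2 (given by a list enumerating it)
   containing the origin (hence nonempty). *)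
Definition is_shape (Sh : list pt) : Prop := In (0, 0) Sh.

(* The lattice with generator matrix G = [[v11, v12], [v21, v22]]
   (rows v1 = (v11, v12), v2 = (v21, v22)). *)
Definition in_lattice (v11 v12 v21 v22 : Z) (x : pt) : Prop :=
  exists u1 u2 : Z, x = (u1 * v11 + u2 * v21, u1 * v12 + u2 * v22).

Definition lin_indep (v11 v12 v21 v22 : Z) : Prop :=
  v11 * v22 - v12 * v21 <> 0.

Definition in_copy (Sh : list pt) (lam x : pt) : Prop := In (psub x lam) Sh.

Definition lattice_tiling (v11 v12 v21 v22 : Z) (Sh : list pt) : Prop :=
  (forall lam mu x : pt,
      in_lattice v11 v12 v21 v22 lam -> in_lattice v11 v12 v21 v22 mu ->
      in_copy Sh lam x -> in_copy Sh mu x -> lam = mu) /\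
  (forall x : pt, exists lam : pt,
      in_lattice v11 v12 v21 v22 lam /\ in_copy Sh lam x).

(* p is the folded-row of (Lambda, S, delta): p 0 = 0 and
   p (k+1) = (p k + delta) - c(p k + delta), where c(x) is the (unique under
   tiling) lattice point lam with x in S + lam. *)
Definition is_folded_row (v11 v12 v21 v22 : Z) (Sh : list pt) (delta : pt)
    (p : nat -> pt) : Prop :=
  p O = (0, 0) /\
  forall k : nat, exists lam : pt,
    in_lattice v11 v12 v21 v22 lam /\
    in_copy Sh lam (padd (p k) delta) /\
    p (S k) = psub (padd (p k) delta) lam.

Definition defines_folding (v11 v12 v21 v22 : Z) (Sh : list pt) (delta : pt)
    : Prop :=
  forall p : nat -> pt, is_folded_row v11 v12 v21 v22 Sh delta p ->
  forall s : pt, In s Sh -> exists k : nat, p k = s.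

From Stdlib Require Import ZArith List Lia IndefiniteDescription.
Open Scope Z_scope.

(* Write x ≡ y when x - y lies in the lattice Λ.  Along a
   folded-row every step adds δ and subtracts a lattice point, so p_k ≡ k·δ,
   and p_k stays in S.  Because Λ tiles with S, the shape S contains exactly
   one point of each class of Z^2/Λ.  Hence (Λ, S, δ) defines a folding iff
   the multiples k·δ (k ≥ 0) meet every class, i.e. iff δ generates the
   finite group Z^2/Λ (nonnegative multiples suffice since |det Λ|·δ ∈ Λ).
   Second, for a primitive δ (det(w, δ) = 1 for some w), the map
   x ↦ det(x, δ) identifies Z^2/Zδ with Z, so δ generates Z^2/Λ iff the
   images det(v1, δ), det(v2, δ) of the generators of Λ generate Z, i.e.
   iff they are coprime.  The theorem is this criterion for the four
   directions (1,1), (1,-1), (1,0), (0,1), each of which is primitive. *)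

Definition pscale (n : Z) (x : pt) : pt := (n * fst x, n * snd x).

Definition det (x y : pt) : Z := fst x * snd y - snd x * fst y.

Ltac pt_ring :=
  repeat match goal with p : pt |- _ => destruct p end;
  unfold padd, psub, pscale, det; cbn [fst snd]; f_equal; ring.

Section Lattice.
Variables v11 v12 v21 v22 : Z.
Local Notation L := (in_lattice v11 v12 v21 v22).
Local Notation v1 := (v11, v12).
Local Notation v2 := (v21, v22).

Lemma lattice_zero : L (0, 0).
Proof. exists 0, 0; reflexivity. Qed.

Lemma lattice_add x y : L x -> L y -> L (padd x y).
Proof. intros [a [b ->]] [c [d ->]]; exists (a + c), (b + d); pt_ring. Qed.

Lemma lattice_scale n x : L x -> L (pscale n x).
Proof. intros [a [b ->]]; exists (n * a), (n * b); pt_ring. Qed.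

Lemma lattice_sub x y : L x -> L y -> L (psub x y).
Proof.
  intros Hx Hy. replace (psub x y) with (padd x (pscale (-1) y)) by pt_ring.
  apply lattice_add; [exact Hx | exact (lattice_scale _ _ Hy)].
Qed.

(* |det Λ|·x ∈ Λ for every x (Cramer's rule); this makes the sequence of
   classes of k·δ periodic. *)
Lemma lattice_det_scale x : L (pscale (Z.abs (det v1 v2)) x).
Proof.
  set (D := det v1 v2).
  assert (HD : forall y, L (pscale D y)).
  { intros [y1 y2]. exists (y1 * v22 - y2 * v21), (y2 * v11 - y1 * v12).
    unfold D; pt_ring. }
  replace (pscale (Z.abs D) x) with (pscale D (pscale (Z.sgn D) x)).
  - apply HD.
  - rewrite <- Z.sgn_abs. pt_ring.
Qed.

Definition generates (d : pt) : Prop :=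
  forall x : pt, exists n : Z, L (psub x (pscale n d)).

Lemma generates_nonneg d :
  lin_indep v11 v12 v21 v22 -> generates d ->
  forall x : pt, exists k : nat, L (psub x (pscale (Z.of_nat k) d)).
Proof.
  intros Hli Hgen x. destruct (Hgen x) as [n Hn].
  set (D := Z.abs (det v1 v2)).
  assert (HD : 0 < D) by (unfold D, det, lin_indep in *; cbn [fst snd]; lia).
  pose proof (Z.mod_pos_bound n D HD) as Hr.
  pose proof (Z.div_mod n D ltac:(lia)) as Hn_eq.
  exists (Z.to_nat (n mod D)). rewrite Z2Nat.id by lia.
  replace (psub x (pscale (n mod D) d))
    with (padd (psub x (pscale n d)) (pscale D (pscale (n / D) d))).
  - apply lattice_add; [exact Hn | apply lattice_det_scale].
  - rewrite Hn_eq at 1. pt_ring.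
Qed.

Section Folding.
Variable S : list pt.
Hypothesis S_shape : is_shape S.
Hypothesis S_disjoint : forall lam mu x : pt, L lam -> L mu ->
  in_copy S lam x -> in_copy S mu x -> lam = mu.
Hypothesis S_cover : forall x : pt, exists lam : pt, L lam /\ in_copy S lam x.

Lemma shape_class_unique s t : In s S -> In t S -> L (psub s t) -> s = t.
Proof.
  intros Hs Ht Hst.
  assert (E : psub s t = (0, 0)).
  { apply (S_disjoint _ _ s Hst lattice_zero); unfold in_copy.
    - replace (psub s (psub s t)) with t by pt_ring. exact Ht.
    - replace (psub s (0, 0)) with s by pt_ring. exact Hs. }
  destruct s, t; unfold psub in E; cbn [fst snd] in E.
  injection E; intros; f_equal; lia.
Qed.

Lemma folded_row_invariant d p :
  is_folded_row v11 v12 v21 v22 S d p ->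
  forall k : nat, In (p k) S /\ L (psub (p k) (pscale (Z.of_nat k) d)).
Proof.
  intros [Hp0 Hstep] k. induction k as [|k [_ IH]].
  - rewrite Hp0. split; [exact S_shape|].
    replace (psub (0, 0) (pscale (Z.of_nat 0) d)) with ((0, 0) : pt) by pt_ring.
    exact lattice_zero.
  - destruct (Hstep k) as [lam [Hlam [Hin Hnext]]]. rewrite Hnext.
    split; [exact Hin|].
    replace (psub (psub (padd (p k) d) lam) (pscale (Z.of_nat (Datatypes.S k)) d))
      with (psub (psub (p k) (pscale (Z.of_nat k) d)) lam)
      by (rewrite Nat2Z.inj_succ; unfold Z.succ; pt_ring).
    exact (lattice_sub _ _ IH Hlam).
Qed.

Lemma folded_row_exists d : exists p, is_folded_row v11 v12 v21 v22 S d p.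
Proof.
  pose (c x := proj1_sig (constructive_indefinite_description _ (S_cover x))).
  assert (Hc : forall x, L (c x) /\ in_copy S (c x) x)
    by (intro x; exact (proj2_sig (constructive_indefinite_description _ (S_cover x)))).
  pose (p := fix p (k : nat) : pt :=
         match k with
         | O => (0, 0)
         | Datatypes.S k => psub (padd (p k) d) (c (padd (p k) d))
         end).
  exists p. split; [reflexivity|].
  intro k. exists (c (padd (p k) d)).
  destruct (Hc (padd (p k) d)) as [Hl Hin]. auto.
Qed.

Theorem folding_iff_generates d :
  lin_indep v11 v12 v21 v22 ->
  defines_folding v11 v12 v21 v22 S d <-> generates d.
Proof.
  intro Hli. split.
  - intros Hfold x.
    destruct (folded_row_exists d) as [p Hp].
    destruct (S_cover x) as [lam [Hlam Hx]].
    destruct (Hfold p Hp _ Hx) as [k Hk].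
    destruct (folded_row_invariant d p Hp k) as [_ Hpk]. rewrite Hk in Hpk.
    exists (Z.of_nat k).
    replace (psub x (pscale (Z.of_nat k) d))
      with (padd lam (psub (psub x lam) (pscale (Z.of_nat k) d))) by pt_ring.
    exact (lattice_add _ _ Hlam Hpk).
  - intros Hgen p Hp s Hs.
    destruct (generates_nonneg d Hli Hgen s) as [k Hk].
    destruct (folded_row_invariant d p Hp k) as [Hpk Hpk_class].
    exists k. symmetry. apply shape_class_unique; [exact Hs | exact Hpk |].
    replace (psub s (p k))
      with (psub (psub s (pscale (Z.of_nat k) d))
                 (psub (p k) (pscale (Z.of_nat k) d))) by pt_ring.
    exact (lattice_sub _ _ Hk Hpk_class).
Qed.

End Folding.

Lemma det_kernel_primitive w d y :
  det w d = 1 -> det y d = 0 -> y = pscale (det w y) d.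
Proof.
  destruct w as [a b], d as [d1 d2], y as [y1 y2].
  unfold det, pscale; cbn [fst snd]. intros Hw Hy.
  assert (E : y1 * d2 = y2 * d1) by lia.
  f_equal.
  - transitivity (y1 * (a * d2 - b * d1)); [rewrite Hw; ring|].
    transitivity (a * (y1 * d2) - b * y1 * d1); [ring|]. rewrite E. ring.
  - transitivity (y2 * (a * d2 - b * d1)); [rewrite Hw; ring|].
    transitivity (a * y2 * d2 - b * (y2 * d1)); [ring|]. rewrite <- E. ring.
Qed.

Theorem generates_iff_gcd w d :
  det w d = 1 -> generates d <-> Z.gcd (det v1 d) (det v2 d) = 1.
Proof.
  intro Hw. split.
  - intro Hgen. destruct (Hgen w) as [n [u1 [u2 Hu]]].
    apply Z.bezout_1_gcd. exists u1, u2. rewrite <- Hw.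
    (* det(·, δ) is linear and kills δ, so det(w, δ) = det(w - nδ, δ). *)
    transitivity (det (psub w (pscale n d)) d).
    + rewrite Hu. destruct d. unfold det; cbn [fst snd]. ring.
    + destruct w, d. unfold det, psub, pscale; cbn [fst snd]. ring.
  - intros Hgcd x. apply Z.gcd_bezout in Hgcd. destruct Hgcd as [u1 [u2 Hu]].
    set (m := det x d).
    set (lam := ((m * u1) * v11 + (m * u2) * v21, (m * u1) * v12 + (m * u2) * v22) : pt).
    assert (Hlam : L lam) by (exists (m * u1), (m * u2); reflexivity).
    assert (Hker : det (psub x lam) d = 0).
    { transitivity (m * (1 - (u1 * det v1 d + u2 * det v2 d))).
      - unfold lam, m. destruct x, d. unfold det, psub; cbn [fst snd]. ring.
      - rewrite Hu. ring. }
    clearbody lam. exists (det w (psub x lam)).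
    rewrite <- (det_kernel_primitive w d _ Hw Hker).
    replace (psub x (psub x lam)) with lam by pt_ring. exact Hlam.
Qed.

Corollary folding_iff_gcd S w d :
  lin_indep v11 v12 v21 v22 -> is_shape S -> lattice_tiling v11 v12 v21 v22 S ->
  det w d = 1 ->
  defines_folding v11 v12 v21 v22 S d <-> Z.gcd (det v1 d) (det v2 d) = 1.
Proof.
  intros Hli Hshape [Hdisjoint Hcover] Hw.
  rewrite folding_iff_generates by assumption.
  exact (generates_iff_gcd w d Hw).
Qed.

End Lattice.

Lemma gcd_up_to_sign a b c e :
  (c = a \/ c = - a) -> (e = b \/ e = - b) -> Z.gcd c e = Z.gcd a b.
Proof.
  intros [-> | ->] [-> | ->];
    rewrite ?Z.gcd_opp_l, ?Z.gcd_opp_r; reflexivity.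
Qed.

Theorem mainTheorem4 (v11 v12 v21 v22 : Z) (S : list pt) :
  lin_indep v11 v12 v21 v22 ->
  is_shape S ->
  lattice_tiling v11 v12 v21 v22 S ->
  (defines_folding v11 v12 v21 v22 S (1, 1)
     <-> Z.gcd (v22 - v21) (v11 - v12) = 1) /\
  (defines_folding v11 v12 v21 v22 S (1, -1)
     <-> Z.gcd (v22 + v21) (v11 + v12) = 1) /\
  (defines_folding v11 v12 v21 v22 S (1, 0)
     <-> Z.gcd v12 v22 = 1) /\
  (defines_folding v11 v12 v21 v22 S (0, 1)
     <-> Z.gcd v11 v21 = 1).
Proof.
  intros Hli Hshape Htiling.
  (* Each of the four directions is primitive. *)
  rewrite (folding_iff_gcd _ _ _ _ S (1, 0) (1, 1)),
          (folding_iff_gcd _ _ _ _ S (-1, 0) (1, -1)),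
          (folding_iff_gcd _ _ _ _ S (0, -1) (1, 0)),
          (folding_iff_gcd _ _ _ _ S (1, 0) (0, 1)) by (assumption || reflexivity).
  unfold det; cbn [fst snd].
  rewrite (Z.gcd_comm (v22 - v21)), (Z.gcd_comm (v22 + v21)).
  repeat split; intro H; (etransitivity; [apply gcd_up_to_sign | exact H]);
    first [left; ring | right; ring].
Qed.
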